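(* Consider the setting of the world-model-learning problem: $p_1,\dots,p_d\in(0,1)$ with $\sum_kp_k=1$; tasks $h_i=h_i'\circ\psi^{-1}$ sampled independently by drawing $k$ with $\Pr[k=i]=p_i$ and then $h_i'$ uniformly from $\mathcal{F}^d_k$; representations $\Phi$ range over maps $\{-1,1\}^m\to\mathcal{Z}$ with $\Phi\circ\psi$ a bijection of $\mathcal{Z}$, and $g_i$ is the unique function with $g_i\circ\Phi\in\mathcal{H}(h_i)$. Now measure degrees in a new basis: let $U_d$ be a compatible basis transform of $\mathbb{R}^{\{-1,1\}^d}$ and $U_m$ a compatible basis transform of $\mathbb{R}^{\{-1,1\}^m}$, and replace the objective by $\frac1n\big(\sum_{i=1}^n\deg_{U_d}(g_i)+\sum_{j=1}^d\deg_{U_m}(\Phi_j)\big)$. Then, almost surely, as $n\to\infty$ this objective converges for every admissible $\Phi$, and every $\Phi^*$ minimizing the limit learns the world model up to negations and permutations: there exist a permutation $i_1,\dots,i_d$ of $[d]$ and signs $s_j\in\{-1,1\}$ with $\Phi^*_j(\psi(z))=s_jz_{i_j}$ for all $j\in[d]$, $z\in\mathcal{Z}$.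
   Context: Standing setup: $m\ge d\ge1$, $\mathcal{Z}=\{-1,1\}^d$, $\psi:\mathcal{Z}\to\{-1,1\}^m$ injective, $\mathcal{X}=\psi(\mathcal{Z})$. For $f:\{-1,1\}^n\to\mathbb{R}$, $f=\sum_{S\subseteq[n]}\hat f(S)\chi_S$, $\chi_S(x)=\prod_{i\in S}x_i$, $\deg(f)=\max\{|S|:\hat f(S)\ne 0\}$. $\mathcal{H}(h)$: functions on $\{-1,1\}^m$ agreeing with task $h$ on $\mathcal{X}$. Finite-precision convention: fix finite $V\subset\mathbb{R}$ with $\{-1,1\}\subseteq V$; $\mathcal{F}^d$ = all functions $\{-1,1\}^d\to V$, $\mathcal{F}^d_k=\{h\in\mathcal{F}^d:\deg h\le k\}$. $\mathbb{R}^{\{-1,1\}^n}$ denotes the real vector space of all functions $\{-1,1\}^n\to\mathbb{R}$. A basis transform is an invertible linear map $U$ on $\mathbb{R}^{\{-1,1\}^n}$ (so $\{U(\chi_S)\}_{S\subseteq[n]}$ is a basis); the degree of $f$ under $U$ is $\deg_U(f):=\max\{\deg(U^{-1}(\chi_S)):\hat f(S)\ne0\}$. $U$ is compatible if $\deg(U(\chi_S))=\deg(\chi_S)=|S|$ for every $S\subseteq[n]$. *)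

From HB Require Import structures.
From mathcomp Require Import all_boot all_order all_algebra.
From mathcomp Require Import finmap fingroup perm.
From mathcomp Require Import all_classical all_reals all_analysis.
Set Implicit Arguments. Unset Strict Implicit. Unset Printing Implicit Defensive.
Import Order.TTheory GRing.Theory Num.Theory.
Local Open Scope classical_set_scope.
Local Open Scope ring_scope.

(* The hypercube {-1,1}^n: a point is encoded as x : 'I_n -> bool,
   coordinate i has the real value pm1 (x i) (true |-> 1, false |-> -1). *)
Notation cube n := {ffun 'I_n -> bool}.

Section Fourier.
Variable R : realType.

Definition pm1 (b : bool) : R := if b then 1 else -1.

Local Notation fn n := {ffun cube n -> R}.

Definition chi (n : nat) (S : {set 'I_n}) : fn n :=
  [ffun x : cube n => \prod_(i in S) pm1 (x i)].

Definition fhat (n : nat) (f : fn n) (S : {set 'I_n}) : R :=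
  (2 ^+ n)^-1 * \sum_(x : cube n) f x * chi S x.

(* deg f = max { |S| : \hat f(S) <> 0 }  (= 0 for f = 0) *)
Definition deg (n : nat) (f : fn n) : nat :=
  \max_(S : {set 'I_n} | fhat f S != 0) #|S|.

Definition lin_map (n : nat) (U : fn n -> fn n) : Prop :=
  forall (a : R) (f g : fn n),
    U [ffun x : cube n => a * f x + g x] = [ffun x : cube n => a * U f x + U g x].

Definition basis_transform (n : nat) (U Uinv : fn n -> fn n) : Prop :=
  lin_map U /\ cancel U Uinv /\ cancel Uinv U.

Definition compatible (n : nat) (U : fn n -> fn n) : Prop :=
  forall S : {set 'I_n}, deg (U (chi S)) = #|S|.

Definition degU (n : nat) (Uinv : fn n -> fn n) (f : fn n) : nat :=
  \max_(S : {set 'I_n} | fhat f S != 0) deg (Uinv (chi S)).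

Notation taskf d V := {ffun cube d -> V}.

Definition taskval (d : nat) (V : {fset R}) (h : taskf d V) : fn d :=
  [ffun z : cube d => val (h z)].

Definition Fk (d : nat) (V : {fset R}) (k : nat) : {set taskf d V} :=
  [set h | (deg (taskval h) <= k)%N].

Definition admissible (d m : nat) (psi : cube d -> cube m)
  (Phi : {ffun cube m -> cube d}) : Prop :=
  bijective (fun z => Phi (psi z)).

(* g : the unique function with g o Phi agreeing with h = h' o psi^{-1}
   on X = psi(Z), i.e. g (Phi (psi z)) = h' z (well defined for admissible
   Phi; the default value 0 is never used in that case). *)
Definition gfun (d m : nat) (V : {fset R}) (psi : cube d -> cube m)
  (Phi : {ffun cube m -> cube d}) (h : taskf d V) : fn d :=
  [ffun y : cube d => (match [pick z | Phi (psi z) == y] with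
             | Some z => val (h z) | None => 0 end : R)].

Definition coordf (d m : nat) (Phi : {ffun cube m -> cube d}) (j : 'I_d) : fn m :=
  [ffun x : cube m => pm1 (Phi x j)].

Definition objective (d m : nat) (V : {fset R}) (psi : cube d -> cube m)
  (Udinv : fn d -> fn d) (Uminv : fn m -> fn m)
  (tasks : nat -> taskf d V) (Phi : {ffun cube m -> cube d}) (n : nat) : R :=
  (n%:R)^-1 * ((\sum_(i < n) (degU Udinv (gfun psi Phi (tasks i)))%:R)
               + (\sum_(j < d) (degU Uminv (coordf Phi j)))%:R).

End Fourier.

Definition mutually_independent (R : realType) (dT : measure_display)
  (T : measurableType dT) (P : probability T R) (A : Type)
  (X : nat -> T -> A) : Prop :=
  forall (I : {fset nat}) (a : nat -> A),
    P (\bigcap_(i in [set` I]) [set w | X i w = a i]) =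
    (\prod_(i <- I) P [set w | X i w = a i])%E.

From Pilot Require Import Defs.
From HB Require Import structures.
From mathcomp Require Import all_boot all_order all_algebra.
From mathcomp Require Import finmap fingroup perm.
From mathcomp Require Import all_classical all_reals all_analysis.
From mathcomp Require Import measurable_realfun.
From mathcomp Require Import lra ring.
Import Order.TTheory GRing.Theory Num.Theory numFieldNormedType.Exports.
Local Open Scope ring_scope.
Set Implicit Arguments. Unset Strict Implicit. Unset Printing Implicit Defensive.

Section Walsh.
Variable R : realType.
Local Notation pm1 := (pm1 R).
Local Notation chi := (chi R).
Local Notation fn n := {ffun cube n -> R}.

Lemma pm1_neg b : pm1 (~~ b) = - pm1 b.
Proof. by case: b; rewrite /Defs.pm1 ?opprK. Qed.

Lemma pm1_neq0 b : pm1 b != 0.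
Proof. by case: b; rewrite /Defs.pm1 ?oppr_eq0 oner_eq0. Qed.

Lemma pm1_inj : injective pm1.
Proof. by case; case; rewrite /Defs.pm1 // => eq1; exfalso; move: eq1; lra. Qed.

Lemma pm1_xorb b x : pm1 (xorb b x) = pm1 (~~ b) * pm1 x.
Proof. by case: b; case: x; rewrite /Defs.pm1 /= ?mulr1 ?mul1r ?mulrN1 ?opprK. Qed.

Variable n : nat.

Lemma chiE (S : {set 'I_n}) x : chi S x = \prod_i (if i \in S then pm1 (x i) else 1).
Proof. by rewrite /Defs.chi ffunE big_mkcond. Qed.

Lemma sum_cube_prod (F : 'I_n -> bool -> R) :
  \sum_(x : cube n) \prod_i F i (x i) = \prod_i (F i true + F i false).
Proof. by rewrite -(eq_bigr _ (fun i _ => big_bool _ (F i))) bigA_distr_bigA. Qed.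

Lemma prod_two_or_zero (P : pred 'I_n) :
  \prod_i (if P i then 2 else 0) = (if [forall i, P i] then 2 ^+ n else 0 :> R).
Proof.
case: forallP => [allP | /existsNP[i /negP/negbTE Pi]].
  by rewrite -[in RHS](card_ord n) -prodr_const; apply: eq_bigr => i _; rewrite allP.
by rewrite (bigD1 i) //= Pi mul0r.
Qed.

Lemma chi_orthogonal (S T : {set 'I_n}) :
  \sum_(x : cube n) chi S x * chi T x = (S == T)%:R * 2 ^+ n.
Proof.
under eq_bigr => x _ do rewrite !chiE -big_split /=.
rewrite (sum_cube_prod (fun i b => (if i \in S then pm1 b else 1) *
                                   (if i \in T then pm1 b else 1))).
rewrite (eq_bigr (fun i => if (i \in S) == (i \in T) then 2 else 0)); last first.
  by move=> i _; case: (i \in S); case: (i \in T); rewrite /Defs.pm1 /=; ring.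
rewrite (prod_two_or_zero (fun i => (i \in S) == (i \in T))); case: eqP => [-> | neST].
  by rewrite mul1r; case: forallP => // /(_ _); rewrite eqxx.
rewrite mul0r; case: forallP => // eqST; case: neST.
by apply/setP => i; apply/eqP.
Qed.

Lemma chi_complete (x y : cube n) :
  \sum_S chi S y * chi S x = (y == x)%:R * 2 ^+ n.
Proof.
have -> : \sum_S chi S y * chi S x = \prod_i (pm1 (y i) * pm1 (x i) + 1).
  rewrite bigA_distr; apply: eq_bigr => S _.
  by rewrite !chiE -big_split /=; apply: eq_bigr => i _; case: (i \in S); rewrite ?mulr1.
rewrite (eq_bigr (fun i => if y i == x i then 2 else 0)); last first.
  by move=> i _; case: (y i); case: (x i); rewrite /Defs.pm1 /=; ring.
rewrite (prod_two_or_zero (fun i => y i == x i)); case: eqP => [-> | neyx].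
  by rewrite mul1r; case: forallP => // /(_ _); rewrite eqxx.
rewrite mul0r; case: forallP => // eqyx; case: neyx.
by apply/ffunP => i; apply/eqP.
Qed.

Lemma two_expn_neq0 : 2 ^+ n != 0 :> R.
Proof. by rewrite expf_neq0 // pnatr_eq0. Qed.

Lemma fhat_chi (T S : {set 'I_n}) : fhat (chi T) S = (S == T)%:R.
Proof.
rewrite /fhat (eq_bigr (fun x => chi S x * chi T x)) => [|x _]; last exact: mulrC.
by rewrite chi_orthogonal mulrCA mulVf ?mulr1 // two_expn_neq0.
Qed.

Lemma scale_ffunE (a : R) (f : fn n) x : (a *: f) x = a * f x.
Proof. by rewrite ffunE. Qed.

Lemma fhat0 S : fhat (0 : fn n) S = 0.
Proof. by rewrite /fhat big1 ?mulr0 // => x _; rewrite ffunE mul0r. Qed.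

Lemma fhat_sum (I : Type) (r : seq I) (v : I -> R) (F : I -> fn n) S :
  fhat (\sum_(i <- r) v i *: F i) S = \sum_(i <- r) v i * fhat (F i) S.
Proof.
rewrite /fhat.
under eq_bigr => x _ do rewrite sum_ffunE big_distrl /=.
rewrite exchange_big mulr_sumr; apply: eq_bigr => i _.
rewrite [RHS]mulrCA !mulr_sumr; apply: eq_bigr => x _.
by rewrite scale_ffunE -mulrA.
Qed.

Lemma fourier_expansionE (f : fn n) x : f x = \sum_S fhat f S * chi S x.
Proof.
under eq_bigr => S _ do rewrite /fhat -mulrA mulr_suml.
rewrite -mulr_sumr exchange_big /=.
under eq_bigr => y _ do under eq_bigr => S _ do rewrite -mulrA.
under eq_bigr => y _ do rewrite -mulr_sumr chi_complete.
rewrite (bigD1 x) //= big1 => [|y]; last first.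
  by rewrite eq_sym => /negbTE ->; rewrite mul0r mulr0.
by rewrite eqxx mul1r addr0 mulrC mulfK // two_expn_neq0.
Qed.

Lemma fourier_expansion (f : fn n) : f = \sum_S fhat f S *: chi S.
Proof.
apply/ffunP => x; rewrite sum_ffunE fourier_expansionE.
by apply: eq_bigr => S _; rewrite scale_ffunE.
Qed.

Lemma fhat_inj (f g : fn n) : (forall S, fhat f S = fhat g S) -> f = g.
Proof.
move=> fg; rewrite (fourier_expansion f) (fourier_expansion g).
by apply: eq_bigr => S _; rewrite fg.
Qed.

Lemma degP (f : fn n) k :
  reflect (forall S, fhat f S != 0 -> (#|S| <= k)%N) (deg f <= k)%N.
Proof. exact: bigmax_leqP. Qed.

Lemma card_le_deg (f : fn n) S : fhat f S != 0 -> (#|S| <= deg f)%N.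
Proof. exact: (@leq_bigmax_cond _ _ (fun S : {set 'I_n} => #|S|)). Qed.

Lemma deg_chi (S : {set 'I_n}) : deg (chi S) = #|S|.
Proof.
apply/eqP; rewrite eqn_leq; apply/andP; split.
  apply/degP => T; rewrite fhat_chi.
  by case: (eqVneq T S) => [-> | _] //; rewrite mulr0n eqxx.
by apply: card_le_deg; rewrite fhat_chi eqxx oner_eq0.
Qed.

Lemma deg_sum (I : Type) (r : seq I) (v : I -> R) (F : I -> fn n) k :
  (forall i, v i != 0 -> (deg (F i) <= k)%N) ->
  (deg (\sum_(i <- r) v i *: F i)%R <= k)%N.
Proof.
move=> degF; apply/degP => S; rewrite fhat_sum; apply: contraR => gtk.
rewrite big1 // => i _; have [-> | /degF degFi] := eqVneq (v i) 0; first by rewrite mul0r.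
apply/eqP; rewrite mulf_eq0; apply/orP; right.
by apply: contraNT gtk => /card_le_deg cardS; exact: leq_trans cardS degFi.
Qed.

End Walsh.

Section DegreePreserving.
Variables (R : realType) (n : nat).
Local Notation fn := {ffun cube n -> R}.
Local Notation chi := (chi R).
Variables (U Uinv : fn -> fn).
Hypothesis HU : basis_transform U Uinv.
Hypothesis HUc : compatible U.

Lemma lin_mapE a (f g : fn) : U (a *: f + g) = a *: U f + U g.
Proof.
have ffunDZ (h h' : fn) : [ffun x => a * h x + h' x] = a *: h + h'.
  by apply/ffunP => x; rewrite !ffunE.
by rewrite -!ffunDZ; case: HU => linU _; exact: linU.
Qed.

Lemma lin_map0 : U 0 = 0.
Proof.
have := lin_mapE 1 0 0; rewrite scaler0 addr0 scale1r => /esym/eqP.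
by rewrite -subr_eq0 addrK => /eqP.
Qed.

Lemma lin_map_sum (I : Type) (r : seq I) (v : I -> R) (F : I -> fn) :
  U (\sum_(i <- r) v i *: F i) = \sum_(i <- r) v i *: U (F i).
Proof.
elim: r => [|i r IHr]; first by rewrite !big_nil lin_map0.
by rewrite !big_cons lin_mapE IHr.
Qed.

Lemma deg_compatible_le (f : fn) : (deg (U f) <= deg f)%N.
Proof.
rewrite {1}(fourier_expansion f) lin_map_sum; apply: deg_sum => S nzS.
by rewrite HUc; exact: card_le_deg.
Qed.

Section LowDegree.
Variable k : nat.
Let low := [set S : {set 'I_n} | (#|S| <= k)%N].
Let ix (j : 'I_#|low|) : {set 'I_n} := enum_val j.

Let card_ix j : (#|ix j| <= k)%N.
Proof. by have := enum_valP j; rewrite inE. Qed.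

Lemma low_deg_expansion (g : fn) : (deg g <= k)%N ->
  g = \sum_(j < #|low|) fhat g (ix j) *: chi (ix j).
Proof.
move=> degg; rewrite {1}(fourier_expansion g) (bigID (mem low)) /=.
rewrite [X in _ + X]big1 ?addr0 => [|S]; first exact: big_enum_val.
rewrite inE -ltnNge => gtk; suff -> : fhat g S = 0 by rewrite scale0r.
by apply: contraTeq gtk => /card_le_deg cardS; rewrite -leqNgt (leq_trans cardS).
Qed.

Definition lowmx : 'M[R]_#|low| := \matrix_(i, j) fhat (U (chi (ix i))) (ix j).

Let chi_comb (v : 'rV[R]_#|low|) : fn := \sum_(j < #|low|) v 0 j *: chi (ix j).

Let fhat_chi_comb v j : fhat (chi_comb v) (ix j) = v 0 j.
Proof.
rewrite fhat_sum (bigD1 j) //= big1 => [|i neij].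
  by rewrite fhat_chi eqxx mulr1 addr0.
by rewrite fhat_chi (inj_eq enum_val_inj) eq_sym (negbTE neij) mulr0.
Qed.

Let lin_map_chi_comb v : U (chi_comb v) = chi_comb (v *m lowmx).
Proof.
rewrite lin_map_sum.
under eq_bigr => i _ do rewrite (@low_deg_expansion (U _)) ?HUc ?deg_chi ?card_ix // scaler_sumr.
rewrite exchange_big; apply: eq_bigr => j _.
rewrite !mxE scaler_suml; apply: eq_bigr => i _.
by rewrite scalerA mxE.
Qed.

Lemma lowmx_unit : lowmx \in unitmx.
Proof.
rewrite unitmxE unitfE; apply/det0P => -[v nz_v vM0].
have comb0 : chi_comb v = 0.
  case: HU => _ [UK _].
  have comb0 : chi_comb 0 = 0 by rewrite /chi_comb big1 // => j _; rewrite mxE scale0r.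
  by rewrite -[chi_comb v]UK lin_map_chi_comb vM0 comb0 -{1}lin_map0 UK.
case/eqP: nz_v; apply/rowP => j.
by rewrite -fhat_chi_comb comb0 fhat0 mxE.
Qed.

Lemma compatible_onto_low_deg (g : fn) : (deg g <= k)%N ->
  exists2 f, (deg f <= k)%N & U f = g.
Proof.
move=> degg; pose c := \row_j fhat g (ix j).
exists (chi_comb (c *m invmx lowmx)).
  by apply: deg_sum => j _; rewrite deg_chi card_ix.
rewrite lin_map_chi_comb -mulmxA mulVmx ?lowmx_unit // mulmx1.
by rewrite [RHS](low_deg_expansion degg); apply: eq_bigr => j _; rewrite mxE.
Qed.

End LowDegree.

Lemma deg_inv_chi (T : {set 'I_n}) : deg (Uinv (chi T)) = #|T|.
Proof.
case: HU => _ [UK KU].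
apply/eqP; rewrite eqn_leq; apply/andP; split.
  have [f degf <-] := compatible_onto_low_deg (eq_leq (deg_chi R T)).
  by rewrite UK.
by rewrite -{1}(deg_chi R T) -{1}(KU (chi T)) deg_compatible_le.
Qed.

Lemma degU_deg (f : fn) : degU Uinv f = deg f.
Proof. by apply: eq_bigr => S _; rewrite deg_inv_chi. Qed.

End DegreePreserving.

Section DegreeOne.
Variables (R : realType) (n : nat).
Local Notation fn := {ffun cube n -> R}.
Local Notation pm1 := (pm1 R).
Local Notation chi := (chi R).

Definition flip (j : 'I_n) (x : cube n) : cube n :=
  [ffun i => if i == j then ~~ x i else x i].

Lemma chi_set1 j (x : cube n) : chi [set j] x = pm1 (x j).
Proof. by rewrite /Defs.chi ffunE big_set1. Qed.

Lemma chi_flip_notin (S : {set 'I_n}) j x : j \notin S -> chi S (flip j x) = chi S x.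
Proof.
move=> jNS; rewrite /Defs.chi !ffunE; apply: eq_bigr => i iS; rewrite ffunE.
by case: eqP => // eqij; rewrite -eqij iS in jNS.
Qed.

Lemma deg_le1_support (f : fn) S : (deg f <= 1)%N -> fhat f S != 0 ->
  S = finset.set0 \/ exists j, S = [set j].
Proof.
move=> degf /card_le_deg/leq_trans/(_ degf); rewrite leq_eqVlt ltnS leqn0 cards_eq0.
by case/orP => [/cards1P | /eqP]; [right | left].
Qed.

Lemma deg_le1_flip (f : fn) j x : (deg f <= 1)%N ->
  f x - f (flip j x) = 2 * fhat f [set j] * pm1 (x j).
Proof.
move=> degf; rewrite !fourier_expansionE -sumrB (bigD1 [set j]) //= big1 ?addr0.
  by rewrite !chi_set1 ffunE eqxx pm1_neg; ring.
move=> S neSj; have [-> | nzS] := eqVneq (fhat f S) 0; first by rewrite !mul0r subrr.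
rewrite chi_flip_notin ?subrr //.
case: (deg_le1_support degf nzS) => [-> | [i eqS]]; first by rewrite inE.
by rewrite eqS in neSj *; rewrite inE; apply: contra neSj => /eqP ->.
Qed.

Lemma deg_le1_const (f : fn) : (deg f <= 1)%N ->
  (forall j, fhat f [set j] = 0) -> forall x, f x = fhat f finset.set0.
Proof.
move=> degf fhat1 x; rewrite fourier_expansionE (bigD1 finset.set0) //= big1 ?addr0.
  by rewrite /Defs.chi ffunE big_set0 mulr1.
move=> S neS0; have [-> | nzS] := eqVneq (fhat f S) 0; first by rewrite mul0r.
case: (deg_le1_support degf nzS) => [eqS | [j eqS]]; first by rewrite eqS eqxx in neS0.
by rewrite eqS fhat1 mul0r.
Qed.

Lemma deg_le1_bool (c : cube n -> bool) : (deg [ffun x => pm1 (c x)] <= 1)%N ->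
  (exists b, forall x, c x = b) \/ exists j b, forall x, c x = xorb b (x j).
Proof.
set f := [ffun x => pm1 (c x)] => degf.
have fE x : f x = pm1 (c x) by rewrite ffunE.
case: (boolP [forall j, fhat f [set j] == 0]) => [/forallP fhat1 | /forallPn[j nzj]].
  left; exists (c [ffun => true]) => x; apply: (@pm1_inj R).
  by rewrite -!fE !(deg_le1_const degf (fun j => eqP (fhat1 j))).
right; exists j, (~~ c [ffun => true]).
have cflip x : c (flip j x) = ~~ c x.
  have nz : 2 * fhat f [set j] * pm1 (x j) != 0.
    by rewrite mulf_neq0 ?pm1_neq0 // mulf_neq0 // pnatr_eq0.
  have := deg_le1_flip j x degf; rewrite !fE.
  by case: (c x); case: (c (flip j x)) => //= /esym/eqP; rewrite subrr (negbTE nz).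
have fx x : pm1 (c x) = fhat f [set j] * pm1 (x j).
  have := deg_le1_flip j x degf; rewrite !fE cflip pm1_neg opprK -mulrA => eq2.
  apply: (@mulfI _ 2); first by rewrite pnatr_eq0.
  by rewrite -eq2 mulr_natl mulr2n.
move=> x; apply: (@pm1_inj R).
by rewrite pm1_xorb negbK fx (fx [ffun => true]) ffunE /Defs.pm1 mulr1.
Qed.

End DegreeOne.

Section Precomposition.
Variables (R : realType) (d : nat) (V : {fset R}) (tau : cube d -> cube d).
Hypothesis tau_bij : bijective tau.

Definition precomp (h : {ffun cube d -> V}) : {ffun cube d -> V} := [ffun z => h (tau z)].

Lemma precomp_inj : injective precomp.
Proof.
case: tau_bij => tau' _ tauK h1 h2 /ffunP eqh; apply/ffunP => z.
by have := eqh (tau' z); rewrite !ffunE tauK.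
Qed.

(* Precomposition permutes task functions, so those it pushes out of F_K
   (of degree > K) are as many as those it pulls in (of degree <= K). *)
Lemma sum_deg_precomp_ge (K : nat) :
  (\sum_(h in Fk d V K) deg (taskval h) + #|precomp @: Fk d V K :\: Fk d V K|
    <= \sum_(h in Fk d V K) deg (taskval (precomp h)))%N.
Proof.
set F := Fk d V K; set G := precomp @: F; pose D (g : {ffun cube d -> V}) := deg (taskval g).
rewrite -(big_imset D (in2W precomp_inj)) /= -/G.
rewrite [X in (_ <= X)%N](big_setID F) [X in (X + _ <= _)%N](big_setID G) /= finset.setIC -addnA.
rewrite leq_add2l.
have cardGF : #|G :\: F| = #|F :\: G|.
  have cardG : #|G| = #|F| by rewrite card_imset //; exact: precomp_inj.
  by apply/eqP; rewrite -(eqn_add2l #|G :&: F|) cardsID finset.setIC cardsID cardG.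
have outG : (#|G :\: F| * K.+1 <= \sum_(g in G :\: F) D g)%N.
  by rewrite -sum_nat_const; apply: leq_sum => g; rewrite !inE -ltnNge => /andP[].
have outF : (\sum_(g in F :\: G) D g <= #|F :\: G| * K)%N.
  by rewrite -sum_nat_const; apply: leq_sum => g; rewrite !inE => /andP[].
by apply: leq_trans outG; rewrite mulnS addnC leq_add2l -cardGF in outF *.
Qed.

End Precomposition.

Lemma sqr_bracket K n : (K.+1 ^ 2 <= n)%N ->
  exists2 k, (K <= k)%N & (k.+1 ^ 2 <= n < k.+2 ^ 2)%N.
Proof.
have sqr_ltS k : (k.+1 ^ 2 < k.+2 ^ 2)%N by rewrite ltn_exp2r.
elim: n => [|n IHn]; first by rewrite expnS.
rewrite leq_eqVlt ltnS => /orP[/eqP <- | /IHn[k leKk /andP[le_kn lt_nk]]].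
  by exists K; rewrite ?leqnn ?sqr_ltS.
have [lt_Sn_k | ge_Sn_k] := ltnP n.+1 (k.+2 ^ 2).
  by exists k; rewrite // lt_Sn_k leqW.
exists k.+1; first exact: leqW.
by rewrite ge_Sn_k (leq_ltn_trans lt_nk (sqr_ltS k.+1)).
Qed.

Section MeanFromSquares.
Variable R : realType.
Local Open Scope classical_set_scope.

(* Interpolation between the consecutive squares x^2 <= N <= (x+1)^2,
   whose gap 2x+1 is negligible against e x^2 once e x >= 6. *)
Lemma squeeze_between_squares (e q x N s a b : R) :
  0 <= q <= 1 -> 1 <= x -> 6 <= e * x -> x * x <= N <= (x + 1) * (x + 1) ->
  a <= s <= b ->
  `|a - x * x * q| <= e / 8 * (x * x) ->
  `|b - (x + 1) * (x + 1) * q| <= e / 8 * ((x + 1) * (x + 1)) ->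
  `|q * N - s| <= e * N.
Proof.
move=> /andP[q0 q1] x1 ex /andP[xN Nx] /andP[a_s s_b].
rewrite !ler_norml => /andP[a1 a2] /andP[b1 b2].
have e0 : 0 < e by nra.
have f1 : q * (x * x) <= q * N by rewrite ler_wpM2l.
have f2 : q * N <= q * ((x + 1) * (x + 1)) by rewrite ler_wpM2l.
have f3 : e * ((x + 1) * (x + 1)) <= 4 * (e * (x * x)) by nra.
have f4 : 2 * x + 1 <= e * (x * x) / 2 by nra.
have f5 : e * (x * x) <= e * N by rewrite ler_wpM2l // ltW.
apply/andP; split; nra.
Qed.

Lemma cvg_mean_from_squares (S : nat -> R) (q : R) :
  {homo S : m n / (m <= n)%N >-> m <= n} -> 0 <= q <= 1 ->
  (forall e, 0 < e -> exists K, forall k, (K <= k)%N ->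
      `|S (k.+1 ^ 2)%N - (k.+1 ^ 2)%:R * q| <= e * (k.+1 ^ 2)%:R) ->
  (fun n => n%:R^-1 * S n) @ \oo --> q.
Proof.
move=> S_homo q01 Sq; apply/cvgrPdist_le => e e0.
have [K SqK] := Sq (e / 8) (divr_gt0 e0 (ltr0Sn R 7)).
pose K' := Num.bound (6 / e).
have ltK' : 6 / e < K'%:R by apply: archi_boundP; rewrite divr_ge0 // ltW.
exists ((maxn K K').+1 ^ 2)%N => // n /= le_n.
have [k le_k /andP[kn nk]] := sqr_bracket le_n.
have leKk : (K <= k)%N by apply: leq_trans le_k; rewrite leq_maxl.
have leK'k : (K' <= k)%N by apply: leq_trans le_k; rewrite leq_maxr.
set x := (k.+1)%:R : R.
have sqrx : (k.+1 ^ 2)%:R = x * x by rewrite /x -natrM expnS expn1.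
have sqrx1 : (k.+2 ^ 2)%:R = (x + 1) * (x + 1) by rewrite /x natr1 -natrM expnS expn1.
have x1 : 1 <= x by rewrite /x ler1n.
have xe : 6 <= e * x.
  rewrite mulrC -ler_pdivrMr //; apply/ltW/(lt_le_trans ltK').
  by rewrite /x ler_nat leqW.
have N0 : 0 < n%:R :> R by rewrite ltr0n (leq_trans _ kn) // expn_gt0.
have -> : q - n%:R^-1 * S n = (q * n%:R - S n) / n%:R by field; rewrite gt_eqF.
rewrite normrM normfV (gtr0_norm N0) ler_pdivrMr //.
apply: (squeeze_between_squares (x := x) (a := S (k.+1 ^ 2)%N) (b := S (k.+2 ^ 2)%N)) => //.
- by rewrite -sqrx -sqrx1 !ler_nat kn ltnW.
- by apply/andP; split; apply: S_homo; rewrite // ltnW.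
- by rewrite -sqrx SqK.
- by rewrite -sqrx1 SqK // leqW.
Qed.

End MeanFromSquares.

Section InverseSquares.
Variable R : realType.
Local Open Scope ereal_scope.

Lemma telescope_harmonic (n : nat) :
  (\sum_(0 <= k < n) ((k.+1)%:R^-1 - (k.+2)%:R^-1) = 1 - (n.+1)%:R^-1 :> R)%R.
Proof.
elim: n => [|n IHn]; first by rewrite big_geq // invr1 subrr.
by rewrite big_nat_recr //= IHn addrA subrK.
Qed.

Lemma inv_sqr_le_telescope (k : nat) :
  ((k.+1 ^ 2)%:R^-1 <= 2 * ((k.+1)%:R^-1 - (k.+2)%:R^-1) :> R)%R.
Proof.
rewrite natrX -[(k.+2)%:R]natr1; set x := (k.+1)%:R.
have x1 : (1 <= x)%R by rewrite ler1n.
rewrite -subr_ge0 (_ : (_ - _ = (x - 1) / (x ^+ 2 * (x + 1)))%R).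
  by rewrite divr_ge0 ?subr_ge0 // mulr_ge0 // ?sqr_ge0 ?addr_ge0 // (le_trans _ x1).
by field; rewrite !gt_eqF // (lt_le_trans _ x1) // ?ltr01 // ltr_wpDr // ltr01.
Qed.

Lemma series_inv_sqr_lty (c : R) : (0 <= c)%R ->
  \sum_(0 <= k <oo) (c / (k.+1 ^ 2)%:R)%:E < +oo.
Proof.
move=> c0; pose t k := (2 * c * ((k.+1)%:R^-1 - (k.+2)%:R^-1))%R.
have t0 k : (0 <= t k)%R.
  by rewrite !mulr_ge0 // subr_ge0 lef_pV2 ?posrE // ler_nat.
apply: (@le_lt_trans _ _ (\sum_(0 <= k <oo) (t k)%:E)).
  apply: lee_nneseries => [k _ _ | k _]; rewrite lee_fin ?divr_ge0 //.
  by rewrite /t [(2 * c)%R]mulrC -mulrA ler_wpM2l // inv_sqr_le_telescope.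
apply: (@le_lt_trans _ _ (2 * c)%:E); last exact: ltry.
apply: lime_le; first by apply: is_cvg_nneseries => k _ _; rewrite lee_fin.
apply: nearW => n; rewrite sumEFin lee_fin /t -mulr_sumr telescope_harmonic.
by rewrite ler_piMr ?mulr_ge0 // gerBl invr_ge0.
Qed.

End InverseSquares.

Lemma sum_prod (R : nmodType) (I J : finType) (F : I * J -> R) :
  \sum_(u : I * J) F u = \sum_i \sum_j F (i, j).
Proof. by rewrite pair_bigA; apply: eq_bigr => -[]. Qed.

Section PairwiseIndependentEvents.
Context d (T : measurableType d) (R : realType) (P : probability T R).
Local Open Scope classical_set_scope.

Lemma integral_sum_indic (I : finType) (c : I -> R) (A : I -> set T) :
  (forall i, measurable (A i)) ->
  (\int[P]_w (\sum_i c i * \1_(A i) w)%:E = (\sum_i c i * fine (P (A i)))%:E)%E.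
Proof.
move=> mA; under eq_integral do rewrite -sumEFin.
rewrite integral_sum //; last first.
  move=> i; apply: (eq_integrable _ (fun w => (c i)%:E * (\1_(A i) w)%:E)%E) => [//|w _|].
    by rewrite EFinM.
  by apply: integrableZl => //; exact: integrable_indic.
rewrite -sumEFin; apply: eq_bigr => i _.
under eq_integral do rewrite EFinM.
rewrite integralZl //; last exact: integrable_indic.
by rewrite integral_indic // setIT EFinM fineK // fin_num_measure.
Qed.

Variables (B : nat -> set T) (q : R).
Hypothesis mB : forall i, measurable (B i).
Hypothesis PB : forall i, P (B i) = q%:E.
Hypothesis PBB : forall i j, i != j -> P (B i `&` B j) = (q * q)%:E.

Lemma prob_event_01 : 0 <= q <= 1.
Proof.
by rewrite -!lee_fin -(PB 0) measure_ge0 probability_le1.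
Qed.

Definition hits n w : R := \sum_(i < n) \1_(B i) w.

Lemma measurable_hits n : measurable_fun setT (hits n).
Proof. by apply: measurable_sum => i; exact: measurable_indic. Qed.

Lemma hits_homo w : {homo hits^~ w : m n / (m <= n)%N >-> m <= n}.
Proof.
move=> m n le_mn; rewrite /hits -(subnKC le_mn) big_split_ord lerDl.
by apply: sumr_ge0 => i _; rewrite /indic ler0n.
Qed.

Let coef (s : bool) : R := if s then 1 else - q.
Let sel (A : set T) (s : bool) : set T := if s then A else setT.

Let measurable_sel i s : measurable (sel (B i) s).
Proof. by case: s; rewrite /sel; [exact: mB | exact: measurableT]. Qed.

Let indic_centered A w : \1_A w - q = \sum_s coef s * \1_(sel A s) w.
Proof. by rewrite big_bool /coef /sel /= indicT /=; ring. Qed.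

Lemma sqr_dev_hits n w :
  (hits n w - n%:R * q) ^+ 2 =
  \sum_(u : ('I_n * 'I_n) * (bool * bool))
    coef u.2.1 * coef u.2.2 * \1_(sel (B u.1.1) u.2.1 `&` sel (B u.1.2) u.2.2) w.
Proof.
have -> : hits n w - n%:R * q = \sum_(i < n) (\1_(B i) w - q).
  by rewrite sumrB sumr_const card_ord mulr_natl.
rewrite expr2 mulr_suml !sum_prod /=.
under [RHS]eq_bigr do under eq_bigr do rewrite sum_prod /=.
apply: eq_bigr => i _.
rewrite mulr_sumr; apply: eq_bigr => j _.
rewrite !indic_centered mulr_suml; apply: eq_bigr => s _.
rewrite mulr_sumr; apply: eq_bigr => t _.
by rewrite indicI /=; ring.
Qed.

Let pair_moment i j :
  \sum_s \sum_t coef s * coef t * fine (P (sel (B i) s `&` sel (B j) t)) =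
  (i == j)%:R * (q - q * q).
Proof.
rewrite !big_bool /= setIT setTI setTI !PB probability_setT.
have [<- | neij] := eqVneq i j; first by rewrite setIid PB /=; ring.
by rewrite PBB //=; ring.
Qed.

Lemma integral_sqr_dev_hits n :
  (\int[P]_w ((hits n w - n%:R * q) ^+ 2)%:E = (n%:R * (q - q * q))%:E)%E.
Proof.
under eq_integral do rewrite sqr_dev_hits.
rewrite integral_sum_indic => [|u]; last exact: measurableI.
congr EFin; rewrite !sum_prod /= mulr_natl -[in RHS](card_ord n) -sumr_const.
apply: eq_bigr => i _; under eq_bigr do rewrite sum_prod /= pair_moment.
rewrite (bigD1 i) //= big1 => [|j neji]; last by rewrite val_eqE eq_sym (negbTE neji) mul0r.
by rewrite eqxx mul1r addr0.
Qed.

Lemma measurable_dev_hits n (t : R) :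
  measurable [set w | (t <= `|hits n w - n%:R * q|)%R].
Proof.
rewrite -[X in measurable X]setTI; apply: measurable_fun_le => //.
apply: measurableT_comp => //; apply: measurable_funB => //; exact: measurable_hits.
Qed.

Lemma chebyshev_hits n (t : R) : 0 < t ->
  (P [set w | (t <= `|hits n w - n%:R * q|)%R] <= (n%:R * (q - q * q) / t ^+ 2)%:E)%E.
Proof.
move=> t0; set E := [set w | _].
suff le_tE : ((t ^+ 2)%:E * P E <= (n%:R * (q - q * q))%:E)%E.
  by rewrite mulrC EFinM lee_pdivlMl ?exprn_gt0.
have mE : measurable E by exact: measurable_dev_hits.
have -> : ((t ^+ 2)%:E * P E = \int[P]_w (t ^+ 2 * \1_E w)%:E)%E.
  under eq_integral do rewrite EFinM.
  by rewrite integralZl ?integral_indic ?setIT //; exact: integrable_indic.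
rewrite -integral_sqr_dev_hits; apply: ge0_le_integral => //.
- by move=> w _; rewrite lee_fin mulr_ge0 // ?sqr_ge0.
- by apply/measurable_EFinP; apply: measurable_funM => //; exact: measurable_indic.
- apply/measurable_EFinP; apply: measurable_funX; apply: measurable_funB => //.
  exact: measurable_hits.
- move=> w _; rewrite lee_fin /indic; case: (boolP (w \in E)) => [/set_mem tw | _] /=.
    rewrite mulr1n mulr1 -[X in _ <= X]ger0_norm ?sqr_ge0 // normrX.
    by rewrite lerXn2r ?nnegrE ?(ltW t0).
  by rewrite mulr0n mulr0 sqr_ge0.
Qed.

Let dev_event (m k : nat) : set T :=
  [set w | ((m.+1)%:R^-1 * (k.+1 ^ 2)%:R <= `|hits (k.+1 ^ 2) w - (k.+1 ^ 2)%:R * q|)%R].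

Let measurable_dev_event m k : measurable (dev_event m k).
Proof. exact: measurable_dev_hits. Qed.

Lemma prob_dev_event_le m k :
  (P (dev_event m k) <= ((m.+1)%:R ^+ 2 / (k.+1 ^ 2)%:R)%:E)%E.
Proof.
set N := (k.+1 ^ 2)%:R; set M := (m.+1)%:R.
have N0 : 0 < N :> R by rewrite ltr0n expn_gt0.
have M0 : 0 < M :> R by rewrite ltr0n.
have t0 : 0 < M^-1 * N by rewrite mulr_gt0 ?invr_gt0.
apply: le_trans (chebyshev_hits _ t0) _; rewrite lee_fin.
have -> : N * (q - q * q) / (M^-1 * N) ^+ 2 = (q - q * q) * (M ^+ 2 / N).
  by field; rewrite !gt_eqF.
have /andP[q0 q1] := prob_event_01.
rewrite -[X in _ <= X]mul1r ler_wpM2r ?divr_ge0 ?sqr_ge0 ?ltW //; nra.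
Qed.

Lemma prob_lim_sup_dev_event m : P (lim_sup_set (dev_event m)) = 0.
Proof.
apply: lim_sup_set_cvg0 => //.
apply: le_lt_trans (series_inv_sqr_lty (sqr_ge0 ((m.+1)%:R : R))).
by apply: lee_nneseries => [k _ _|k _]; [exact: measure_ge0 | exact: prob_dev_event_le].
Qed.

Lemma dev_squares_small w : (forall m, ~ lim_sup_set (dev_event m) w) ->
  forall e, 0 < e -> exists K, forall k, (K <= k)%N ->
    `|hits (k.+1 ^ 2) w - (k.+1 ^ 2)%:R * q| <= e * (k.+1 ^ 2)%:R.
Proof.
move=> notsup e e0; pose m := Num.bound e^-1.
have le_me : (m.+1)%:R^-1 <= e.
  rewrite -[X in _ <= X]invrK lef_pV2 ?posrE ?invr_gt0 //.
  apply/ltW/(lt_le_trans (archi_boundP _)); first by rewrite invr_ge0 ltW.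
  by rewrite ler_nat.
have := notsup m; rewrite /lim_sup_set => /existsNP[K notK].
exists K => k le_Kk.
have /negP : ~ dev_event m k w by move=> dev; apply: notK; exists k.
rewrite /dev_event /= -ltNge => /ltW lt_dev.
by apply: le_trans lt_dev _; rewrite ler_wpM2r.
Qed.

Theorem slln_hits : {ae P, forall w, (fun n => n%:R^-1 * hits n w) @ \oo --> q}.
Proof.
apply: (negligibleS _ (negligible_bigcup
  (fun m => _ : P.-negligible (lim_sup_set (dev_event m))))).
  move=> w /= ncvg; apply: contrapT => notsup; apply: ncvg.
  apply: cvg_mean_from_squares (hits_homo w) prob_event_01 _.
  by apply: dev_squares_small => m supm; apply: notsup; exists m.
move=> m; exists (lim_sup_set (dev_event m)); split => //.
  by apply: bigcap_measurable => // k _; exact: bigcup_measurable.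
exact: prob_lim_sup_dev_event.
Qed.

End PairwiseIndependentEvents.

Arguments hits {d T R} B n w.

Lemma signed_perm_of_dictators (d : nat) (f g : cube d -> cube d) : cancel f g ->
  (forall i, exists jb : 'I_d * bool, forall z, g z i = xorb jb.2 (z jb.1)) ->
  exists (pi : {perm 'I_d}) (s : 'I_d -> bool), forall j z, f z j = xorb (s j) (z (pi j)).
Proof.
move=> fK /fin_all_exists[jb g_jb].
have jb_inj : injective (fun i => (jb i).1).
  move=> i1 i2 /= eq12; apply/eqP; apply: contraT => ne12.
  pose y : cube d := [ffun k => if k == i2 then ~~ xorb (jb i1).2 (jb i2).2 else false].
  have := g_jb i1 (f y); have := g_jb i2 (f y); rewrite !fK -eq12 !ffunE eqxx (negbTE ne12).
  by case: (jb i1).2; case: (jb i2).2; case: (f y (jb i1).1) => //=.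
pose sigma := perm jb_inj.
exists sigma^-1%g, (fun j => (jb (sigma^-1%g j)).2) => j z.
have := g_jb (sigma^-1%g j) (f z); rewrite fK.
have -> : (jb (sigma^-1%g j)).1 = j by have := permKV sigma j; rewrite permE.
by move=> ->; case: (jb (sigma^-1%g j)).2; case: (f z j).
Qed.

Section WorldModel.
Variables (R : realType) (d m : nat) (psi : cube d -> cube m) (V : {fset R}).
Local Notation task := {ffun cube d -> V}.
Local Notation repr := {ffun cube m -> cube d}.
Local Notation pm1 := (pm1 R).
Local Open Scope classical_set_scope.

Lemma gfun_precomp (Phi : repr) tau (h : task) :
  cancel (fun z => Phi (psi z)) tau -> cancel tau (fun z => Phi (psi z)) ->
  gfun psi Phi h = taskval (precomp tau h).
Proof.
move=> PhiK tauK; apply/ffunP => y; rewrite !ffunE.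
case: pickP => [z /eqP <- | noz]; first by rewrite PhiK.
by have := noz (tau y); rewrite tauK eqxx.
Qed.

Definition task_weight (p : 'I_d -> R) (a : 'I_d * task) : R :=
  p a.1 * (if a.2 \in Fk d V a.1.+1 then #|Fk d V a.1.+1|%:R^-1 else 0).

Definition expected_deg (Udinv : {ffun cube d -> R} -> {ffun cube d -> R})
    (p : 'I_d -> R) (Phi : repr) : R :=
  \sum_(a : 'I_d * task) (degU Udinv (gfun psi Phi a.2))%:R * task_weight p a.

Lemma cvg_objective (Udinv : {ffun cube d -> R} -> {ffun cube d -> R})
    (Uminv : {ffun cube m -> R} -> {ffun cube m -> R})
    (p : 'I_d -> R) (ks : nat -> 'I_d * task) (Phi : repr) :
  (forall a, n%:R^-1 * \sum_(i < n) (ks i == a)%:R @[n --> \oo] --> task_weight p a) ->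
  objective psi Udinv Uminv (fun i => (ks i).2) Phi n @[n --> \oo] -->
    expected_deg Udinv p Phi.
Proof.
move=> freq; pose D (h : task) := (degU Udinv (gfun psi Phi h))%:R : R.
have -> : objective psi Udinv Uminv (fun i => (ks i).2) Phi = fun n =>
    \sum_a D a.2 * (n%:R^-1 * \sum_(i < n) (ks i == a)%:R) +
    n%:R^-1 * (\sum_(j < d) degU Uminv (coordf R Phi j))%:R.
  apply: funext => n; rewrite /objective mulrDr natr_sum; congr (_ + _).
  under [RHS]eq_bigr do rewrite mulrCA mulr_sumr.
  rewrite -mulr_sumr exchange_big /=; congr (_ * _); apply: eq_bigr => i _.
  rewrite (bigD1 (ks i)) //= big1 => [|a /negbTE nea]; last by rewrite eq_sym nea mulr0.
  by rewrite eqxx mulr1 addr0.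
rewrite -[expected_deg _ _ _]addr0; apply: cvgD.
  apply: cvg_big => //; first exact: add_continuous.
  by move=> a _; apply: cvgM; [exact: cvg_cst | exact: freq].
rewrite -[0](mul0r (\sum_(j < d) degU Uminv (coordf R Phi j))%:R).
apply: cvgM; last exact: cvg_cst.
by rewrite -cvg_shiftS; exact: cvg_harmonic.
Qed.

Hypothesis psi_inj : injective psi.

Definition psi_inv : repr :=
  [ffun y => if [pick z | psi z == y] is Some z then z else [ffun => true]].

Lemma psi_invK : cancel psi psi_inv.
Proof.
move=> z; rewrite ffunE; case: pickP => [z' /eqP /psi_inj -> // | noz].
by have := noz z; rewrite eqxx.
Qed.

Lemma admissible_psi_inv : admissible psi psi_inv.
Proof. by exists id => z; rewrite /= psi_invK. Qed.

Lemma gfun_psi_inv (h : task) : gfun psi psi_inv h = taskval h.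
Proof.
rewrite (@gfun_precomp _ id) => [|z|z]; rewrite /= ?psi_invK //.
by congr taskval; apply/ffunP => z; rewrite ffunE.
Qed.

Hypotheses (Vm1 : -1 \in V) (V1 : 1 \in V).

Definition coord_task (i : 'I_d) : task :=
  [ffun z : cube d => if z i then [` V1]%fset else [` Vm1]%fset].

Lemma coord_task_deg1 i : coord_task i \in Fk d V 1.
Proof.
rewrite inE; have -> : taskval (coord_task i) = chi R [set i]%SET.
  by apply/ffunP => z; rewrite !ffunE big_set1; case: (z i).
by rewrite deg_chi cards1.
Qed.

Section Minimizer.
Variables (Ud Udinv : {ffun cube d -> R} -> {ffun cube d -> R}) (p : 'I_d -> R).
Hypotheses (HUd : basis_transform Ud Udinv) (HUc : compatible Ud).
Hypothesis p_gt0 : forall k, 0 < p k.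

Let W (k : 'I_d) : R := p k / #|Fk d V k.+1|%:R.

Lemma expected_degE (Phi : repr) : expected_deg Udinv p Phi =
  \sum_k W k * \sum_(h in Fk d V k.+1) (deg (gfun psi Phi h))%:R.
Proof.
rewrite /expected_deg sum_prod; apply: eq_bigr => k _.
rewrite mulr_sumr [RHS]big_mkcond; apply: eq_bigr => h _.
rewrite (degU_deg HUd HUc) /task_weight /=; case: (h \in _); last by rewrite !mulr0.
by rewrite /W mulrC.
Qed.

Variables (Phi : repr) (tau : cube d -> cube d).
Hypotheses (PhiK : cancel (fun z => Phi (psi z)) tau)
           (tauK : cancel tau (fun z => Phi (psi z))).

Lemma expected_deg_precomp_gap :
  expected_deg Udinv p psi_inv +
    \sum_k W k * #|precomp tau @: Fk d V k.+1 :\: Fk d V k.+1|%:R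
  <= expected_deg Udinv p Phi.
Proof.
rewrite !expected_degE -big_split /=; apply: ler_sum => k _.
rewrite -mulrDr; apply: ler_wpM2l; first by rewrite divr_ge0 // ltW.
under eq_bigr do rewrite gfun_psi_inv.
under [X in _ <= X]eq_bigr do rewrite (gfun_precomp _ PhiK tauK).
by rewrite -!natr_sum -natrD ler_nat sum_deg_precomp_ge //; exact: Bijective tauK PhiK.
Qed.

Hypothesis Phi_min : expected_deg Udinv p Phi <= expected_deg Udinv p psi_inv.

Lemma minimizer_precomp_closed (k : 'I_d) :
  precomp tau @: Fk d V k.+1 \subset Fk d V k.+1.
Proof.
pose c (k : 'I_d) := #|precomp tau @: Fk d V k.+1 :\: Fk d V k.+1|%:R : R.
have W_gt0 k' : 0 < W k'.
  rewrite divr_gt0 // ltr0n card_gt0; apply/set0Pn; exists (coord_task k').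
  by move: (coord_task_deg1 k'); rewrite !inE => /leq_trans; apply.
have Wc_ge0 k' : 0 <= W k' * c k' by rewrite mulr_ge0 ?ler0n // ltW.
have Wc0 : \sum_k W k * c k = 0.
  apply/eqP; rewrite eq_le sumr_ge0 ?andbT //.
  by have := le_trans expected_deg_precomp_gap Phi_min; rewrite gerDl.
have /(_ k isT)/eqP := psumr_eq0P (fun k _ => Wc_ge0 k) Wc0.
by rewrite mulf_eq0 gt_eqF //= pnatr_eq0 cards_eq0 finset.setD_eq0.
Qed.

Lemma minimizer_coord_dictator (i : 'I_d) :
  exists jb : 'I_d * bool, forall z, tau z i = xorb jb.2 (z jb.1).
Proof.
pose k0 : 'I_d := Ordinal (leq_ltn_trans (leq0n i) (ltn_ord i)).
have := fintype.subsetP (minimizer_precomp_closed k0) _ (imset_f _ (coord_task_deg1 i)).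
rewrite inE; have -> : taskval (precomp tau (coord_task i)) = [ffun z => pm1 (tau z i)].
  by apply/ffunP => z; rewrite !ffunE; case: (tau z i).
case/deg_le1_bool => [[b tau_const] | [j [b tau_j]]]; last by exists (j, b).
have := tau_const (Phi (psi [ffun => ~~ b])); rewrite PhiK ffunE.
by case: b tau_const.
Qed.

End Minimizer.

Lemma minimizer_signed_perm (Ud Udinv : {ffun cube d -> R} -> {ffun cube d -> R})
    (p : 'I_d -> R) (Phis : repr) :
  basis_transform Ud Udinv -> compatible Ud -> (forall k, 0 < p k) ->
  admissible psi Phis ->
  (forall Phi, admissible psi Phi -> expected_deg Udinv p Phis <= expected_deg Udinv p Phi) ->
  exists (pi : {perm 'I_d}) (s : 'I_d -> R),
    (forall j, s j = 1 \/ s j = -1) /\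
    (forall j z, pm1 (Phis (psi z) j) = s j * pm1 (z (pi j))).
Proof.
move=> HUd HUc p_gt0 [tau PhisK tauK] Phis_min.
have [pi [s Phis_s]] := signed_perm_of_dictators PhisK
  (minimizer_coord_dictator HUd HUc p_gt0 PhisK tauK (Phis_min _ admissible_psi_inv)).
exists pi, (fun j => pm1 (~~ s j)); split => [j | j z].
  by case: (~~ s j); [left | right].
by rewrite Phis_s pm1_xorb.
Qed.

End WorldModel.

Local Open Scope classical_set_scope.
Local Open Scope ring_scope.

Lemma mutually_independent_pair (R : realType) (dT : measure_display)
    (T : measurableType dT) (P : probability T R) (A : Type) (X : nat -> T -> A)
    (i j : nat) (a b : A) :
  mutually_independent P X -> i != j ->
  P ([set w | X i w = a] `&` [set w | X j w = b]) =
  (P [set w | X i w = a] * P [set w | X j w = b])%E.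
Proof.
move=> indep neij; have := indep [fset i; j]%fset (fun k => if k == i then a else b).
rewrite big_fsetU1 ?big_seq_fset1 ?inE //= eqxx eq_sym (negbTE neij) => <-.
congr (P _); apply/seteqP; split => w /=.
  by move=> [Xi Xj] k /=; rewrite !inE => /orP[] /eqP ->; rewrite ?eqxx // eq_sym (negbTE neij).
move=> Xij; have := Xij i; have := Xij j; rewrite /= !inE !eqxx orbT eq_sym (negbTE neij).
by move=> Xj Xi; split; [apply: Xi | apply: Xj].
Qed.

Unset Implicit Arguments.

Theorem theorem6 (R : realType) (d m : nat) (psi : cube d -> cube m)
  (V : {fset R}) (p : 'I_d -> R)
  (Ud Udinv : {ffun cube d -> R} -> {ffun cube d -> R})
  (Um Uminv : {ffun cube m -> R} -> {ffun cube m -> R})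
  (dT : measure_display) (T : measurableType dT) (P : probability T R)
  (X : nat -> T -> 'I_d * {ffun cube d -> V}) :
  (0 < d)%N -> (d <= m)%N -> injective psi ->
  (-1 \in V) -> (1 \in V) ->
  (forall k, 0 < p k < 1) -> \sum_(k < d) p k = 1 ->
  basis_transform Ud Udinv -> compatible Ud ->
  basis_transform Um Uminv -> compatible Um ->
  (* the i-th sample (k_i, h'_i): Pr[k_i = k] = p_k, h'_i uniform on F^d_k
     (k : 'I_d stands for the degree bound k+1 in [d]) *)
  (forall i a, measurable [set w | X i w = a]) ->
  (forall i (k : 'I_d) (h : {ffun cube d -> V}),
     P [set w | X i w = (k, h)] =
     (p k * (if h \in Fk d V k.+1 then (#|Fk d V k.+1|%:R)^-1 else 0))%:E) ->
  mutually_independent P X ->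
  {ae P, forall w,
    exists L : {ffun cube m -> cube d} -> R,
      (forall Phi, admissible psi Phi ->
         objective psi Udinv Uminv (fun i => (X i w).2) Phi n @[n --> \oo]
           --> L Phi) /\
      (forall Phis, admissible psi Phis ->
         (forall Phi, admissible psi Phi -> L Phis <= L Phi) ->
         exists (pi : {perm 'I_d}) (s : 'I_d -> R),
           (forall j, s j = 1 \/ s j = -1) /\
           (forall (j : 'I_d) (z : cube d),
              pm1 R (Phis (psi z) j) = s j * pm1 R (z (pi j))))}.
Proof.
move=> _ _ psi_inj Vm1 V1 p01 _ HUd HUc _ _ mX PX indep.
pose B a i := [set w | X i w = a].
have PB a i : P (B a i) = (task_weight p a)%:E by case: a => k h; exact: PX.
have PBB a i j : i != j -> P (B a i `&` B a j) = (task_weight p a * task_weight p a)%:E.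
  by move=> neij; rewrite mutually_independent_pair // !PB.
have hitsE a n w : hits (B a) n w = \sum_(i < n) (X i w == a)%:R :> R.
  apply: eq_bigr => i _; rewrite /indic.
  by case: eqP => [Xa | nXa]; [rewrite mem_set | rewrite memNset].
have freq : {ae P, forall w a,
    (fun n => n%:R^-1 * hits (B a) n w) @ \oo --> task_weight p a}.
  by apply: filter_forall => a; apply: slln_hits => [i | i | i j]; [exact: mX | exact: PB | exact: PBB].
apply: filterS freq => w freqw; exists (expected_deg psi V Udinv p); split.
  move=> Phi _; apply: cvg_objective => a.
  by under eq_fun do rewrite -hitsE; exact: freqw.
move=> Phis admS minS; apply: (minimizer_signed_perm psi_inj Vm1 V1 HUd HUc _ admS minS) => k.
by case/andP: (p01 k).
Qed.
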